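(* Consider the system $u_{n+1,x}^j = F^j(x,n,u_{n,x}^j,u_n,u_{n+1})$, $j=1,\dots,N$, with analytic $F^j$, which can be uniquely rewritten as $u_{n-1,x}^j=G^j(x,n,u_{n,x}^j,u_n,u_{n-1})$. Let $$K=\sum_{j=1}^{N}\sum_{k=1}^{\infty}\left(\alpha^j(k)\frac{\partial}{\partial u^j_{n+k}}+\alpha^j(-k)\frac{\partial}{\partial u^j_{n-k}}\right)$$ be a vector field whose coefficients $\alpha^j(\pm k)$ are functions of the dynamical variables. If $K$ satisfies $$D_nKD_n^{-1}=hK$$ for some function $h$ of the dynamical variables, then $K=0$.
   Context: The dynamical variables are $u^j_n,u^j_{n\pm1},u^j_{n\pm2},\dots$ and $u^j_{n,x},u^j_{n,xx},\dots$ ($1\le j\le N$), treated as independent. $D_n$ is the shift operator $D_n y(n)=y(n+1)$ acting on functions of the dynamical variables, where shifted $x$-derivatives are expressed through the system (e.g. $D_n u_{n,x}^j=F^j$, $D_n^{-1}u^j_{n,x}=G^j$); $D_nKD_n^{-1}$ denotes the conjugated operator acting on such functions. *)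

From Stdlib Require Import Reals ZArith List.
From Coquelicot Require Import Coquelicot.
Open Scope R_scope.

(** * Coordinates of the jet space
    VX      : the independent variable x
    VU j m  : u^j_{n+m}            (m : Z)
    VD j i  : u^j_{n, x^(i+1)}      i.e. the (i+1)-th x-derivative of u^j_n
    Indices j >= N are never used by admissible functions. *)
Inductive var : Type :=
| VX : var
| VU : nat -> Z -> var
| VD : nat -> nat -> var.

Definition var_eq_dec : forall v v' : var, {v = v'} + {v <> v'}.
Proof. decide equality; first [apply Nat.eq_dec | apply Z.eq_dec]. Defined.

Definition pt := var -> R.
(** A function of (n, x, dynamical variables). *)
Definition fn := Z -> pt -> R.

Definition upd (w : pt) (v : var) (t : R) : pt :=
  fun v' => if var_eq_dec v v' then t else w v'.

Definition dpart (g : pt -> R) (v : var) (w : pt) : R :=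
  Derive (fun t => g (upd w v t)) (w v).

Definition mset (a : var -> nat) (v : var) (e : nat) : var -> nat :=
  fun v' => if var_eq_dec v v' then e else a v'.

Fixpoint box_sum (L : list var) (K : nat) (c : (var -> nat) -> R) (y : pt) : R :=
  match L with
  | nil => c (fun _ => 0%nat)
  | v :: L' => sum_f_R0 (fun e => y v ^ e * box_sum L' K (fun a => c (mset a v e)) y) K
  end.

Definition analytic_on (P : var -> Prop) (g : pt -> R) : Prop :=
  exists L : list var,
    NoDup L /\ (forall v, In v L -> P v) /\
    (forall w w', (forall v, In v L -> w v = w' v) -> g w = g w') /\
    forall w, exists r, 0 < r /\ exists c : (var -> nat) -> R,
      forall w', (forall v, In v L -> Rabs (w' v - w v) < r) ->
        is_lim_seq (fun K => box_sum L K c (fun v => w' v - w v)) (Finite (g w')) /\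
        exists B, forall K,
          box_sum L K (fun a => Rabs (c a)) (fun v => Rabs (w' v - w v)) <= B.

(** Admissible coordinates: dynamical variables with 1 <= j <= N (indices 0..N-1). *)
Definition dyn_var (N : nat) (v : var) : Prop :=
  match v with
  | VX => False
  | VU j _ => (j < N)%nat
  | VD j _ => (j < N)%nat
  end.

Definition dynx_var (N : nat) (v : var) : Prop :=
  match v with
  | VX => True
  | _ => dyn_var N v
  end.

Definition dyn_fun (N : nat) (g : pt -> R) : Prop := analytic_on (dyn_var N) g.

(** ** The system
    F j x n a u v  stands for  F^j(x, n, u^j_{n,x} = a, u_n = u, u_{n+1} = v);
    G j x n a u v  stands for  G^j(x, n, u^j_{n,x} = a, u_n = u, u_{n-1} = v). *)
Definition Ftype := nat -> R -> Z -> R -> (nat -> R) -> (nat -> R) -> R.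

Definition Ffn (F : Ftype) (j : nat) : fn :=
  fun n w => F j (w VX) n (w (VD j 0)) (fun l => w (VU l 0%Z)) (fun l => w (VU l 1%Z)).
Definition Gfn (G : Ftype) (j : nat) : fn :=
  fun n w => G j (w VX) n (w (VD j 0)) (fun l => w (VU l 0%Z)) (fun l => w (VU l (-1)%Z)).

(** Value of u^j_{n+k,x} (k >= 0) expressed through the system. *)
Fixpoint xpos (F : Ftype) (j : nat) (k : nat) (n : Z) (w : pt) : R :=
  match k with
  | O => w (VD j 0)
  | S k' => F j (w VX) (n + Z.of_nat k')%Z (xpos F j k' n w)
              (fun l => w (VU l (Z.of_nat k'))) (fun l => w (VU l (Z.of_nat k' + 1)%Z))
  end.
(** Value of u^j_{n-k,x} (k >= 0) expressed through the system. *)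
Fixpoint xneg (G : Ftype) (j : nat) (k : nat) (n : Z) (w : pt) : R :=
  match k with
  | O => w (VD j 0)
  | S k' => G j (w VX) (n - Z.of_nat k')%Z (xneg G j k' n w)
              (fun l => w (VU l (- Z.of_nat k')%Z)) (fun l => w (VU l (- Z.of_nat k' - 1)%Z))
  end.

Fixpoint fsum (N : nat) (g : nat -> R) : R :=
  match N with O => 0 | S N' => fsum N' g + g N' end.

Definition Dx (N : nat) (F G : Ftype) (f : fn) : fn :=
  fun n w =>
    dpart (f n) VX w +
    fsum N (fun j =>
      Series (fun k =>
        dpart (f n) (VU j (Z.of_nat k)) w * xpos F j k n w +
        dpart (f n) (VU j (- Z.of_nat (S k))%Z) w * xneg G j (S k) n w) +
      Series (fun i => dpart (f n) (VD j i) w * w (VD j (S i)))).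

Definition Dxn (N : nat) (F G : Ftype) (i : nat) (f : fn) : fn := Nat.iter i (Dx N F G) f.

(** Shift of points induced by D_n and by D_n^{-1}. *)
Definition Sh (N : nat) (F G : Ftype) (n : Z) (w : pt) : pt :=
  fun v => match v with
  | VX => w VX
  | VU j m => w (VU j (m + 1)%Z)
  | VD j i => Dxn N F G i (Ffn F j) n w
  end.
Definition Shinv (N : nat) (F G : Ftype) (n : Z) (w : pt) : pt :=
  fun v => match v with
  | VX => w VX
  | VU j m => w (VU j (m - 1)%Z)
  | VD j i => Dxn N F G i (Gfn G j) n w
  end.

Definition Dn (N : nat) (F G : Ftype) (f : fn) : fn := fun n w => f (n + 1)%Z (Sh N F G n w).
Definition Dninv (N : nat) (F G : Ftype) (f : fn) : fn := fun n w => f (n - 1)%Z (Shinv N F G n w).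

(** The vector field K = sum_j sum_{k>=1} (alpha^j(k) d/du^j_{n+k} + alpha^j(-k) d/du^j_{n-k});
    alpha j m is the coefficient alpha^j(m) (m <> 0; alpha j 0 is unused). *)
Definition Kop (N : nat) (alpha : nat -> Z -> pt -> R) (f : fn) : fn :=
  fun n w => fsum N (fun j =>
    Series (fun k =>
      alpha j (Z.of_nat (S k)) w * dpart (f n) (VU j (Z.of_nat (S k))) w +
      alpha j (- Z.of_nat (S k))%Z w * dpart (f n) (VU j (- Z.of_nat (S k))%Z) w)).

Definition lift (g : pt -> R) : fn := fun _ w => g w.

(* Applying D_n K D_n^{-1} = h K to the coordinate functions u^j_{n+m} gives
     alpha^j(m-1) o D_n = h * alpha^j(m)        (with alpha^j(0) := 0).
   The shift w |-> D_n w of the dynamical variables is onto on every finite set of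
   coordinates: the u_{n+m} are merely relabelled, and D_x^i F^j is affine in its top
   variable u^j_{n,x^(i+1)} with slope dF^j/du^j_{n,x}, which is nonzero because F^j is
   inverted by G^j; so the x-derivatives can be prescribed order by order.  Hence a function
   of the dynamical variables that vanishes after the shift vanishes.
   Descending from m = 0 this gives alpha^j(-k) = 0 for all k.  Ascending, alpha^j(k) = 0
   yields h * alpha^j(k+1) = 0; analytic functions of finitely many variables form an integral
   domain, so either alpha^j(k+1) = 0, or h = 0 and then alpha^j(k+1) o D_n = 0. *)

From Stdlib Require Import Reals ZArith List Lia Lra Classical FunctionalExtensionality.
From Coquelicot Require Import Coquelicot.
Open Scope R_scope.

Lemma upd_eq w v t : upd w v t v = t.
Proof. unfold upd; destruct (var_eq_dec v v); congruence. Qed.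

Lemma upd_neq w v t v' : v <> v' -> upd w v t v' = w v'.
Proof. intros H; unfold upd; destruct (var_eq_dec v v'); congruence. Qed.

Lemma upd_id w v : upd w v (w v) = w.
Proof.
  apply functional_extensionality; intro v'; unfold upd.
  destruct (var_eq_dec v v'); congruence.
Qed.

Lemma upd_upd w v s t : upd (upd w v s) v t = upd w v t.
Proof.
  apply functional_extensionality; intro v'; unfold upd.
  destruct (var_eq_dec v v'); congruence.
Qed.

Lemma upd_comm w u v s t : u <> v -> upd (upd w u s) v t = upd (upd w v t) u s.
Proof.
  intro H; apply functional_extensionality; intro v'; unfold upd.
  destruct (var_eq_dec v v'), (var_eq_dec u v'); congruence.
Qed.

Definition depends_on (S : var -> Prop) (g : pt -> R) : Prop :=
  forall w w', (forall v, S v -> w v = w' v) -> g w = g w'.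

Lemma depends_on_mono (S S' : var -> Prop) g :
  (forall v, S v -> S' v) -> depends_on S g -> depends_on S' g.
Proof. intros HS H w w' E; apply H; intros v Hv; apply E, HS, Hv. Qed.

Lemma depends_on_const S c : depends_on S (fun _ => c).
Proof. intros w w' _; reflexivity. Qed.

Lemma depends_on_coord (S : var -> Prop) v : S v -> depends_on S (fun w => w v).
Proof. intros Hv w w' E; auto. Qed.

Lemma depends_on_plus S a b :
  depends_on S a -> depends_on S b -> depends_on S (fun w => a w + b w).
Proof. intros Ha Hb w w' E; rewrite (Ha w w'), (Hb w w'); auto. Qed.

Lemma depends_on_mult S a b :
  depends_on S a -> depends_on S b -> depends_on S (fun w => a w * b w).
Proof. intros Ha Hb w w' E; rewrite (Ha w w'), (Hb w w'); auto. Qed.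

Lemma depends_on_fsum S N (a : nat -> pt -> R) :
  (forall j, depends_on S (a j)) -> depends_on S (fun w => fsum N (fun j => a j w)).
Proof.
  intros H w w' E; induction N as [|N IH]; simpl; [reflexivity|].
  rewrite IH, (H N w w' E); reflexivity.
Qed.

Lemma depends_on_Series S (a : nat -> pt -> R) :
  (forall k, depends_on S (a k)) -> depends_on S (fun w => Series (fun k => a k w)).
Proof. intros H w w' E; apply Series_ext; intro k; apply H, E. Qed.

Lemma depends_on_upd (S : var -> Prop) g v t :
  depends_on (fun u => S u \/ u = v) g -> depends_on S (fun w => g (upd w v t)).
Proof.
  intros Hg w w' E; apply Hg; intros u Hu.
  destruct (var_eq_dec v u) as [<-|ne]; [rewrite !upd_eq; reflexivity|].
  rewrite !upd_neq by exact ne. destruct Hu as [Hu|Hu]; [apply E, Hu|congruence].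
Qed.

Lemma dpart_depends_on S g v :
  depends_on S g -> S v -> depends_on S (dpart g v).
Proof.
  intros H Hv w w' E; unfold dpart; rewrite (E v Hv).
  apply Derive_ext; intro t; apply H; intros u Hu.
  destruct (var_eq_dec v u) as [<-|ne]; [rewrite !upd_eq | rewrite !upd_neq]; auto.
Qed.

Lemma dpart_outside S g v w : depends_on S g -> ~ S v -> dpart g v w = 0.
Proof.
  intros H Hv; unfold dpart.
  rewrite (Derive_ext _ (fun _ => g w)) by
    (intro t; apply H; intros u Hu; rewrite upd_neq; [reflexivity|congruence]).
  apply Derive_const.
Qed.

Lemma dpart_coord u v w : dpart (fun w => w u) v w = if var_eq_dec v u then 1 else 0.
Proof.
  unfold dpart; destruct (var_eq_dec v u) as [<-|ne].
  - rewrite (Derive_ext _ id) by (intro t; apply upd_eq). apply Derive_id.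
  - rewrite (Derive_ext _ (fun _ => w u)) by (intro t; apply upd_neq, ne).
    apply Derive_const.
Qed.

Lemma dpart_affine g v w a b :
  (forall t, g (upd w v t) = a + b * t) -> dpart g v w = b.
Proof.
  intro H; unfold dpart; rewrite (Derive_ext _ _ _ H).
  apply is_derive_unique; auto_derive; [exact I | ring].
Qed.

Lemma fsum_ext N a b : (forall j, (j < N)%nat -> a j = b j) -> fsum N a = fsum N b.
Proof. induction N; simpl; intros H; [reflexivity|]. rewrite IHN, H; auto. Qed.

Lemma fsum_plus N a b : fsum N (fun j => a j + b j) = fsum N a + fsum N b.
Proof. induction N; simpl; [lra|]. rewrite IHN; lra. Qed.

Lemma fsum_single N a l :
  (l < N)%nat -> (forall j, j <> l -> a j = 0) -> fsum N a = a l.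
Proof.
  intros Hl H; assert (Hz : forall M, (M <= l)%nat -> fsum M a = 0).
  { induction M; simpl; intros; [reflexivity|]. rewrite IHM, H by lia; ring. }
  induction N as [|N IH]; simpl; [lia|].
  destruct (Nat.eq_dec l N) as [->|ne].
  - rewrite Hz by lia; ring.
  - rewrite IH, (H N) by lia; ring.
Qed.

Lemma is_series_sum_f_R0 u l :
  is_lim_seq (fun K => sum_f_R0 u K) (Finite l) -> is_series u l.
Proof.
  intros H; apply (is_lim_seq_ext _ _ _ (fun K => eq_sym (sum_n_Reals u K)) H).
Qed.

Lemma Series_finite a M : (forall i, (M < i)%nat -> a i = 0) -> Series a = sum_f_R0 a M.
Proof.
  intros H; apply is_series_unique, is_series_sum_f_R0.
  apply is_lim_seq_ext_loc with (fun _ => sum_f_R0 a M); [|apply is_lim_seq_const].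
  exists M; intros n Hn; induction n as [|n IH].
  - replace M with 0%nat by lia; reflexivity.
  - destruct (Nat.eq_dec M (S n)) as [->|ne]; [reflexivity|].
    simpl; rewrite <- IH, (H (S n)) by lia; ring.
Qed.

Lemma Series_single a k0 : (forall k, k <> k0 -> a k = 0) -> Series a = a k0.
Proof.
  intros H; rewrite (Series_finite a k0) by (intros; apply H; lia).
  destruct k0 as [|k0]; simpl; [reflexivity|].
  enough (Hz : forall K, (K <= k0)%nat -> sum_f_R0 a K = 0) by (rewrite Hz by lia; ring).
  induction K; simpl; intros; [apply H; lia|]. rewrite IHK, (H (S K)) by lia; ring.
Qed.

Lemma Series_zero a : (forall k, a k = 0) -> Series a = 0.
Proof. intros H; rewrite (Series_single a 0); auto. Qed.

(** * Identity theorem for power series on the line *)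

Definition has_pseries_at (phi : R -> R) (t0 : R) : Prop :=
  exists r, 0 < r /\ exists d, Rbar_le (Finite r) (CV_radius d) /\
    forall t, Rabs (t - t0) < r -> phi t = PSeries d (t - t0).

Definition zeros_cluster_at (phi : R -> R) (t0 : R) : Prop :=
  forall e, 0 < e -> exists t, t <> t0 /\ Rabs (t - t0) < e /\ phi t = 0.

Definition vanishes_near (phi : R -> R) (t0 : R) : Prop :=
  exists r, 0 < r /\ forall t, Rabs (t - t0) < r -> phi t = 0.

Lemma continuous_nonzero_near f t0 : continuous f t0 -> f t0 <> 0 ->
  exists d, 0 < d /\ forall s, Rabs (s - t0) < d -> f s <> 0.
Proof.
  intros Hc Hn.
  assert (He : 0 < Rabs (f t0)) by (apply Rabs_pos_lt, Hn).
  destruct (proj1 (filterlim_locally f (f t0)) Hc (mkposreal _ He)) as [[d Hd] Hb].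
  exists d; split; [exact Hd|]; intros s Hs Hfs.
  specialize (Hb s Hs); change (Rabs (f s - f t0) < Rabs (f t0)) in Hb.
  rewrite Hfs, Rminus_0_l, Rabs_Ropp in Hb; lra.
Qed.

Lemma continuous_zero_of_zeros_cluster f t0 :
  continuous f t0 -> zeros_cluster_at f t0 -> f t0 = 0.
Proof.
  intros Hc Hz; apply NNPP; intro Hn.
  destruct (continuous_nonzero_near f t0 Hc Hn) as (d & Hd & Hnz).
  destruct (Hz d Hd) as (s & _ & Hs & Hfs); exact (Hnz s Hs Hfs).
Qed.

Lemma has_pseries_at_ex_derive phi t0 : has_pseries_at phi t0 -> ex_derive phi t0.
Proof.
  intros (r & Hr & d & Hd & H).
  apply (ex_derive_ext_loc (fun t => PSeries d (t - t0))).
  - exists (mkposreal r Hr); intros t Ht; symmetry; apply H, Ht.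
  - apply (ex_derive_comp (PSeries d) (fun t => t - t0)).
    + apply ex_derive_PSeries; rewrite Rminus_diag, Rabs_R0.
      eapply Rbar_lt_le_trans; [|exact Hd]; exact Hr.
    + auto_derive; exact I.
Qed.

Lemma has_pseries_at_continuous phi t0 : has_pseries_at phi t0 -> continuous phi t0.
Proof.
  intro H; apply (ex_derive_continuous (K := R_AbsRing) (V := R_NormedModule)).
  apply has_pseries_at_ex_derive, H.
Qed.

Lemma has_pseries_at_ext phi psi t0 :
  (forall t, phi t = psi t) -> has_pseries_at phi t0 -> has_pseries_at psi t0.
Proof.
  intros E (r & Hr & d & Hd & H); exists r; split; [exact Hr|]; exists d; split; [exact Hd|].
  intros t Ht; rewrite <- E; apply H, Ht.
Qed.

Lemma has_pseries_at_const c t0 : has_pseries_at (fun _ => c) t0.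
Proof.
  set (d := fun n => if Nat.eq_dec n 0 then c else 0).
  exists 1; split; [lra|]; exists d; split.
  - apply (proj1 (CV_radius_bounded d)); exists (Rabs c); intro n.
    rewrite pow1, Rmult_1_r; unfold d; destruct (Nat.eq_dec n 0); [lra|].
    rewrite Rabs_R0; apply Rabs_pos.
  - intros t _; unfold PSeries; rewrite (Series_single _ 0); [unfold d; simpl; ring|].
    intros k Hk; unfold d; destruct (Nat.eq_dec k 0); [lia|ring].
Qed.

Lemma CV_radius_decr_n (d : nat -> R) n : CV_radius (PS_decr_n d n) = CV_radius d.
Proof.
  induction n as [|n IH]; [apply CV_radius_ext; reflexivity|].
  rewrite <- IH, <- (CV_radius_decr_1 (PS_decr_n d n)); apply CV_radius_ext; intro k.
  unfold PS_decr_1, PS_decr_n; f_equal; lia.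
Qed.

(* If [d 0 = ... = d (n-1) = 0] then [PSeries d x = x ^ n * PSeries (PS_decr_n d n) x], so the
   tail series has the same nonzero zeros, and continuity at [0] forces [d n = 0]. *)
Lemma pseries_coef_zero d :
  Rbar_lt 0 (CV_radius d) -> zeros_cluster_at (PSeries d) 0 -> forall n, d n = 0.
Proof.
  intros Hr Hz n; induction n as [n IH] using (well_founded_induction lt_wf).
  assert (Hdecr : forall x, PSeries d x = x ^ n * PSeries (PS_decr_n d n) x)
    by (intro x; apply PSeries_decr_n_aux; exact IH).
  replace (d n) with (PSeries (PS_decr_n d n) 0)
    by (rewrite PSeries_0; unfold PS_decr_n; f_equal; lia).
  apply continuous_zero_of_zeros_cluster.
  - apply (ex_derive_continuous (K := R_AbsRing) (V := R_NormedModule)).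
    apply ex_derive_PSeries; rewrite Rabs_R0, CV_radius_decr_n; exact Hr.
  - intros e He; destruct (Hz e He) as (x & Hx & Hxe & Hdx).
    exists x; split; [exact Hx|]; split; [exact Hxe|].
    specialize (Hdecr x); rewrite Hdx in Hdecr.
    destruct (Rmult_integral _ _ (eq_sym Hdecr)) as [Hxn|]; [|assumption].
    exfalso; exact (pow_nonzero x n Hx Hxn).
Qed.

Lemma has_pseries_vanishes_near phi t0 :
  has_pseries_at phi t0 -> zeros_cluster_at phi t0 -> vanishes_near phi t0.
Proof.
  intros (r & Hr & d & Hd & Hphi) Hz.
  assert (Hd0 : forall n, d n = 0).
  { apply pseries_coef_zero; [eapply Rbar_lt_le_trans; [|exact Hd]; exact Hr|].
    intros e He; destruct (Hz (Rmin e r) (Rmin_pos _ _ He Hr)) as (t & Ht & Hte & Hpt).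
    exists (t - t0); split; [lra|]; rewrite Rminus_0_r; split.
    - pose proof (Rmin_l e r); lra.
    - rewrite <- Hphi; [exact Hpt|]; pose proof (Rmin_r e r); lra. }
  exists r; split; [exact Hr|]; intros t Ht.
  rewrite Hphi, (PSeries_ext _ (fun _ => 0)) by assumption; apply PSeries_const_0.
Qed.

Lemma vanishes_right phi a b :
  (forall t0, zeros_cluster_at phi t0 -> vanishes_near phi t0) -> a < b ->
  (forall s, a < s < b -> phi s = 0) -> forall t, a < t -> phi t = 0.
Proof.
  intros Hloc Hab Hz t Ht; apply NNPP; intro Hn.
  set (E := fun x => a < x /\ forall y, a < y <= x -> phi y = 0).
  assert (HE : E ((a + b) / 2)) by (split; [lra|]; intros y Hy; apply Hz; lra).
  assert (Hb : bound E).
  { exists t; intros x [Hx Hy]; destruct (Rle_lt_dec x t); [assumption|].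
    exfalso; apply Hn, Hy; lra. }
  destruct (completeness E Hb (ex_intro _ _ HE)) as [s [Hub Hlub]].
  pose proof (Hub _ HE) as Has.
  assert (Hleft : forall y, a < y < s -> phi y = 0).
  { intros y Hy; apply NNPP; intro Hny.
    enough (is_upper_bound E y) by (pose proof (Hlub y H); lra).
    intros x [Hx Hxy]; destruct (Rle_lt_dec x y); [assumption|].
    exfalso; apply Hny, Hxy; lra. }
  destruct (Hloc s) as (r & Hr & Hs).
  { intros e He; exists (s - Rmin e (s - a) / 2).
    pose proof (Rmin_l e (s - a)); pose proof (Rmin_r e (s - a)).
    assert (0 < Rmin e (s - a)) by (apply Rmin_pos; lra).
    split; [lra|]; split; [rewrite Rabs_left; lra|]; apply Hleft; lra. }
  assert (E (s + r / 2)).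
  { split; [lra|]; intros y Hy; destruct (Rlt_le_dec y s); [apply Hleft; lra|].
    apply Hs; rewrite Rabs_pos_eq; lra. }
  pose proof (Hub _ H); lra.
Qed.

Lemma Rabs_opp_minus t t0 : Rabs (- t - - t0) = Rabs (t - t0).
Proof. rewrite <- Rabs_Ropp; f_equal; ring. Qed.

Lemma has_pseries_identity phi a b : (forall t, has_pseries_at phi t) -> a < b ->
  (forall s, a < s < b -> phi s = 0) -> forall t, phi t = 0.
Proof.
  intros Hps Hab Hz t.
  assert (Hloc : forall c, zeros_cluster_at phi c -> vanishes_near phi c)
    by (intro c; apply has_pseries_vanishes_near, Hps).
  destruct (Rlt_le_dec a t) as [Hat|Hta]; [exact (vanishes_right phi a b Hloc Hab Hz t Hat)|].
  rewrite <- (Ropp_involutive t).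
  apply (vanishes_right (fun s => phi (- s)) (- b) (- a)); [|lra| |lra].
  - intros c Hacc; destruct (Hloc (- c)) as (r & Hr & H0).
    + intros e He; destruct (Hacc e He) as (s & Hs & Hse & Hs0).
      exists (- s); rewrite Rabs_opp_minus; repeat split; [lra|exact Hse|exact Hs0].
    + exists r; split; [exact Hr|]; intros s Hs; apply H0; rewrite Rabs_opp_minus; exact Hs.
  - intros s Hs; apply Hz; lra.
Qed.

(** * Analytic functions of finitely many variables *)

Lemma sum_f_R0_head a K : (forall e, (0 < e)%nat -> a e = 0) -> sum_f_R0 a K = a 0%nat.
Proof. intros H; induction K; simpl; [reflexivity|]. rewrite IHK, (H (S K)) by lia; ring. Qed.

Lemma box_sum_vanishing L : forall c K y, (forall u, In u L -> y u = 0) ->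
  box_sum L K c y = box_sum L 0 c (fun _ => 0).
Proof.
  induction L as [|u L IH]; intros c K y Hy; simpl; [reflexivity|].
  rewrite sum_f_R0_head.
  - simpl; rewrite IH by (intros; apply Hy; right; assumption); ring.
  - intros e He; rewrite (Hy u (or_introl eq_refl)), pow_i by exact He; ring.
Qed.

Lemma box_sum_line v L : NoDup L -> forall c, exists d : nat -> R, forall K y,
  (forall u, u <> v -> y u = 0) -> box_sum L K c y = sum_f_R0 (fun e => d e * y v ^ e) K.
Proof.
  induction L as [|u L IH]; intros ND c.
  - exists (fun e => if Nat.eq_dec e 0 then c (fun _ => 0%nat) else 0).
    intros K y _; simpl; rewrite sum_f_R0_head; [simpl; ring|].
    intros e He; destruct (Nat.eq_dec e 0); [lia|ring].
  - inversion ND as [|? ? Hu ND']; subst.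
    destruct (var_eq_dec u v) as [<-|ne].
    + exists (fun e => box_sum L 0 (fun a => c (mset a u e)) (fun _ => 0)).
      intros K y Hy; simpl; apply sum_eq; intros e _.
      rewrite box_sum_vanishing; [ring|].
      intros u' Hu'; apply Hy; intros <-; contradiction.
    + destruct (IH ND' (fun a => c (mset a u 0))) as [d Hd].
      exists d; intros K y Hy; simpl; rewrite sum_f_R0_head; [simpl; rewrite Hd; auto; ring|].
      intros e He; rewrite (Hy u ne), pow_i by exact He; ring.
Qed.

Lemma series_terms_bounded (u : nat -> R) (l : R) :
  is_series u l -> exists M, forall n, Rabs (u n) <= M.
Proof.
  intro H.
  assert (Hcv : Un_cv (fun n => Rabs (u n)) 0).
  { apply is_lim_seq_Reals, (proj1 (is_lim_seq_abs_0 u)), ex_series_lim_0; exists l; exact H. }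
  destruct (cauchy_bound _ (CV_Cauchy _ (exist _ 0 Hcv))) as [M HM].
  exists M; intro n; apply HM; exists n; reflexivity.
Qed.

Definition line_analytic (g : pt -> R) : Prop :=
  forall w v t0, has_pseries_at (fun t => g (upd w v t)) t0.

Lemma analytic_on_line_analytic P g : analytic_on P g -> line_analytic g.
Proof.
  intros (L & ND & _ & _ & Hloc) w v t0.
  destruct (Hloc (upd w v t0)) as (r & Hr & c & Hc).
  destruct (box_sum_line v L ND c) as [d Hd].
  assert (Hser : forall t, Rabs (t - t0) < r ->
    is_series (fun e => d e * (t - t0) ^ e) (g (upd w v t))).
  { intros t Ht; apply is_series_sum_f_R0.
    destruct (Hc (upd w v t)) as [Hl _].
    { intros u _; destruct (var_eq_dec v u) as [<-|ne].
      - rewrite !upd_eq; exact Ht.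
      - rewrite !upd_neq, Rminus_diag, Rabs_R0 by exact ne; exact Hr. }
    eapply is_lim_seq_ext; [|exact Hl]; intro K; simpl; rewrite Hd.
    - rewrite !upd_eq; reflexivity.
    - intros u ne; rewrite !upd_neq by auto; ring. }
  exists (r / 2); split; [lra|]; exists d; split.
  - assert (Hr2 : Rabs (t0 + r / 2 - t0) < r) by (rewrite Rplus_minus_l, Rabs_pos_eq; lra).
    destruct (series_terms_bounded _ _ (Hser _ Hr2))
      as [M HM].
    replace (r / 2) with (t0 + r / 2 - t0) by ring.
    apply (proj1 (CV_radius_bounded d)); exists M; exact HM.
  - intros t Ht; symmetry; apply is_series_unique, Hser; lra.
Qed.

Lemma line_analytic_slice g v t : line_analytic g -> line_analytic (fun w => g (upd w v t)).
Proof.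
  intros H w u t0; destruct (var_eq_dec u v) as [->|ne].
  - apply (has_pseries_at_ext (fun _ => g (upd w v t))); [|apply has_pseries_at_const].
    intro s; rewrite upd_upd; reflexivity.
  - apply (has_pseries_at_ext (fun s => g (upd (upd w v t) u s))); [|apply H].
    intro s; rewrite upd_comm; auto.
Qed.

(* Induction on the variables: if [f q <> 0], the slices of [f] at [v = s] are nonzero for [s]
   near [q v], so the corresponding slices of [g] vanish, and [has_pseries_identity] propagates
   this to all values of [v]. *)
Lemma line_analytic_mult_zero L : forall f g,
  depends_on (fun v => In v L) f -> depends_on (fun v => In v L) g ->
  line_analytic f -> line_analytic g -> (forall w, f w * g w = 0) ->
  (forall w, f w = 0) \/ (forall w, g w = 0).
Proof.
  induction L as [|v L IH]; intros f g Hf Hg Af Ag H0.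
  - set (w0 := fun _ : var => 0).
    assert (Ef : forall w, f w = f w0) by (intro w; apply Hf; intros v []).
    assert (Eg : forall w, g w = g w0) by (intro w; apply Hg; intros v []).
    destruct (Rmult_integral _ _ (H0 w0)); [left|right]; intro w; rewrite ?Ef, ?Eg; auto.
  - assert (Hsl : forall (k : pt -> R) t, depends_on (fun u => In u (v :: L)) k ->
                  depends_on (fun u => In u L) (fun w => k (upd w v t))).
    { intros k t Hk; apply depends_on_upd.
      apply (depends_on_mono (fun u => In u (v :: L))); [|exact Hk].
      intros u [<-|Hu]; [right|left]; auto. }
    destruct (classic (forall w, f w = 0)) as [Hz|Hn]; [left; exact Hz|right].
    apply not_all_ex_not in Hn; destruct Hn as [q Hq].
    destruct (continuous_nonzero_near (fun s => f (upd q v s)) (q v)) as (dl & Hdl & Hnz).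
    { apply has_pseries_at_continuous, Af. }
    { rewrite upd_id; exact Hq. }
    assert (Hgs : forall s, Rabs (s - q v) < dl -> forall w, g (upd w v s) = 0).
    { intros s Hs.
      destruct (IH (fun w => f (upd w v s)) (fun w => g (upd w v s))
        (Hsl f s Hf) (Hsl g s Hg) (line_analytic_slice f v s Af) (line_analytic_slice g v s Ag))
        as [A|B]; [intro w; apply H0| |exact B].
      exfalso; exact (Hnz s Hs (A q)). }
    intro w; rewrite <- (upd_id w v).
    apply (has_pseries_identity (fun s => g (upd w v s)) (q v - dl) (q v + dl)); [apply Ag|lra|].
    intros s Hs; apply Hgs, Rabs_def1; lra.
Qed.

Lemma analytic_on_depends_on P g : analytic_on P g ->
  exists L, (forall v, In v L -> P v) /\ depends_on (fun v => In v L) g.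
Proof. intros (L & _ & HP & Hdep & _); exists L; split; assumption. Qed.

Lemma dyn_fun_mult_zero N f g : dyn_fun N f -> dyn_fun N g ->
  (forall w, f w * g w = 0) -> (forall w, f w = 0) \/ (forall w, g w = 0).
Proof.
  intros Hf Hg H.
  destruct (analytic_on_depends_on _ _ Hf) as (Lf & _ & Df).
  destruct (analytic_on_depends_on _ _ Hg) as (Lg & _ & Dg).
  apply (line_analytic_mult_zero (Lf ++ Lg)); try assumption.
  - apply (depends_on_mono _ _ _ (fun v Hv => in_or_app _ _ v (or_introl Hv)) Df).
  - apply (depends_on_mono _ _ _ (fun v Hv => in_or_app _ _ v (or_intror Hv)) Dg).
  - apply (analytic_on_line_analytic _ _ Hf).
  - apply (analytic_on_line_analytic _ _ Hg).
Qed.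

(** * Surjectivity of the shift D_n *)

Definition order_lt (M : nat) (v : var) : Prop :=
  match v with VD _ i => (i < M)%nat | _ => True end.

Lemma order_lt_le M M' v : (M <= M')%nat -> order_lt M v -> order_lt M' v.
Proof. destruct v; simpl; auto; lia. Qed.

Lemma exists_order_bound (L : list var) : exists M, forall v, In v L -> order_lt M v.
Proof.
  induction L as [|v L [M HM]]; [exists 0%nat; intros v []|].
  exists (S (match v with VD _ i => Nat.max M i | _ => M end)); intros u [<-|Hu].
  - destruct v; simpl; auto; lia.
  - apply (order_lt_le M); [destruct v; lia|exact (HM u Hu)].
Qed.

Definition F_vars (l : nat) (v : var) : Prop :=
  match v with VD j i => j = l /\ i = 0%nat | _ => True end.

Lemma F_vars_order_lt l M v : F_vars l v -> order_lt (S M) v.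
Proof. destruct v; simpl; auto; lia. Qed.

Lemma Ffn_depends_on F l n : depends_on (F_vars l) (Ffn F l n).
Proof.
  intros w w' E; unfold Ffn; rewrite (E VX), (E (VD l 0)) by (simpl; auto).
  f_equal; apply functional_extensionality; intro; apply E; exact I.
Qed.

Lemma xpos_depends_on F j n k : depends_on (order_lt 1) (xpos F j k n).
Proof.
  induction k; intros w w' E; simpl; [apply E; simpl; lia|].
  rewrite (IHk w w' E), (E VX) by exact I.
  f_equal; apply functional_extensionality; intro; apply E; exact I.
Qed.

Lemma xneg_depends_on G j n k : depends_on (order_lt 1) (xneg G j k n).
Proof.
  induction k; intros w w' E; simpl; [apply E; simpl; lia|].
  rewrite (IHk w w' E), (E VX) by exact I.
  f_equal; apply functional_extensionality; intro; apply E; exact I.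
Qed.

Lemma Series_split_last a M : (forall i, (M < i)%nat -> a i = 0) ->
  Series a = Series (fun i => if Nat.ltb i M then a i else 0) + a M.
Proof.
  intros H; rewrite (Series_finite a M H), (Series_finite _ M)
    by (intros i Hi; destruct (Nat.ltb_spec i M); [lia|reflexivity]).
  destruct M as [|M]; simpl; [ring|].
  rewrite Nat.ltb_irrefl, (sum_eq (fun i => if Nat.ltb i (S M) then a i else 0) a); [ring|].
  intros i Hi; destruct (Nat.ltb_spec i (S M)); [reflexivity|lia].
Qed.

Definition Fprime (F : Ftype) (l : nat) (n : Z) : pt -> R := dpart (Ffn F l n) (VD l 0).

Lemma Fprime_depends_on F l n M : depends_on (order_lt (S M)) (Fprime F l n).
Proof.
  apply (depends_on_mono (F_vars l)); [apply F_vars_order_lt|].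
  apply dpart_depends_on; [apply Ffn_depends_on|simpl; auto].
Qed.

Section TotalDerivative.

Variables (N : nat) (F G : Ftype).

Lemma Dx_top_order f n M : depends_on (order_lt (S M)) (f n) ->
  exists B, depends_on (order_lt (S M)) B /\ forall w,
    Dx N F G f n w = B w + fsum N (fun j => dpart (f n) (VD j M) w * w (VD j (S M))).
Proof.
  intros Hf.
  assert (Hd : forall v, order_lt (S M) v -> depends_on (order_lt (S M)) (dpart (f n) v))
    by (intros v Hv; apply dpart_depends_on; assumption).
  exists (fun w => dpart (f n) VX w + fsum N (fun j =>
      Series (fun k => dpart (f n) (VU j (Z.of_nat k)) w * xpos F j k n w +
                       dpart (f n) (VU j (- Z.of_nat (S k))%Z) w * xneg G j (S k) n w) +
      Series (fun i => if Nat.ltb i M then dpart (f n) (VD j i) w * w (VD j (S i)) else 0))).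
  split.
  - apply depends_on_plus; [apply Hd; exact I|].
    apply depends_on_fsum; intro j; apply depends_on_plus.
    + apply depends_on_Series; intro k.
      apply depends_on_plus; apply depends_on_mult; try (apply Hd; exact I).
      * apply (depends_on_mono (order_lt 1)); [intro; apply order_lt_le; lia|].
        apply xpos_depends_on.
      * apply (depends_on_mono (order_lt 1)); [intro; apply order_lt_le; lia|].
        apply xneg_depends_on.
    + apply depends_on_Series; intro i; destruct (Nat.ltb_spec i M).
      * apply depends_on_mult; [apply Hd|apply depends_on_coord]; simpl; lia.
      * apply depends_on_const.
  - intro w; unfold Dx; rewrite Rplus_assoc, <- fsum_plus; f_equal; apply fsum_ext.
    intros j _; rewrite Rplus_assoc; f_equal; apply Series_split_last.
    intros i Hi; rewrite (dpart_outside _ _ _ _ Hf); [ring|simpl; lia].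
Qed.

Lemma Dxn_Ffn_affine l n M : (l < N)%nat -> exists A, depends_on (order_lt (S M)) A /\
  forall w, Dxn N F G (S M) (Ffn F l) n w = A w + Fprime F l n w * w (VD l (S M)).
Proof.
  intros Hl; induction M as [|M [A [HA EA]]].
  - destruct (Dx_top_order (Ffn F l) n 0
      (depends_on_mono _ _ _ (F_vars_order_lt l 0) (Ffn_depends_on F l n))) as (B & HB & EB).
    exists B; split; [exact HB|]; intro w; simpl.
    rewrite EB, (fsum_single N _ l Hl); [reflexivity|].
    intros j ne; rewrite (dpart_outside _ _ _ _ (Ffn_depends_on F l n)); [ring|simpl; lia].
  - set (P := fun v => order_lt (S M) v \/ v = VD l (S M)).
    assert (Hg : depends_on P (Dxn N F G (S M) (Ffn F l) n)).
    { intros w w' E; rewrite !EA, (HA w w'), (Fprime_depends_on F l n M w w'), (E (VD l (S M)));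
        unfold P; auto; intros v Hv; apply E; left; exact Hv. }
    destruct (Dx_top_order (Dxn N F G (S M) (Ffn F l)) n (S M)) as (B & HB & EB).
    { apply (depends_on_mono P); [|exact Hg].
      intros v [Hv| ->]; [apply (order_lt_le (S M)); [lia|exact Hv]|simpl; lia]. }
    exists B; split; [exact HB|]; intro w.
    change (Dxn N F G (S (S M)) (Ffn F l) n w) with (Dx N F G (Dxn N F G (S M) (Ffn F l)) n w).
    rewrite EB, (fsum_single N _ l Hl).
    + f_equal; f_equal; apply (dpart_affine _ _ _ (A w) (Fprime F l n w)).
      intro t; rewrite EA, upd_eq; f_equal; [|f_equal];
        [apply HA|apply (Fprime_depends_on F l n M)];
        intros v Hv; rewrite upd_neq; auto; intros <-; simpl in Hv; lia.
    + intros j ne; rewrite (dpart_outside _ _ _ _ Hg); [ring|].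
      unfold P; simpl; intros [H|H]; [lia|congruence].
Qed.

Lemma Dxn_Ffn_depends_on l n M : (l < N)%nat ->
  depends_on (fun v => order_lt M v \/ v = VD l M) (Dxn N F G M (Ffn F l) n).
Proof.
  intros Hl; destruct M as [|M].
  - apply (depends_on_mono (F_vars l)); [|apply Ffn_depends_on].
    intros [] Hv; simpl in *; auto; destruct Hv; subst; auto.
  - destruct (Dxn_Ffn_affine l n M Hl) as (A & HA & EA).
    intros w w' E; rewrite !EA, (HA w w'), (Fprime_depends_on F l n M w w'), (E (VD l (S M)));
      auto; intros v Hv; apply E; auto.
Qed.

Lemma Dxn_Ffn_order_lt l n M : (l < N)%nat ->
  depends_on (order_lt (S M)) (Dxn N F G M (Ffn F l) n).
Proof.
  intros Hl; apply (depends_on_mono (fun v => order_lt M v \/ v = VD l M));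
    [|exact (Dxn_Ffn_depends_on l n M Hl)].
  intros v [Hv| ->]; [apply (order_lt_le M); [lia|exact Hv]|simpl; lia].
Qed.

End TotalDerivative.

Lemma Ffn_upd F l n w t : Ffn F l n (upd w (VD l 0) t) =
  F l (w VX) n t (fun l' => w (VU l' 0)) (fun l' => w (VU l' 1)).
Proof.
  unfold Ffn; rewrite upd_eq, upd_neq by discriminate.
  f_equal; apply functional_extensionality; intro; apply upd_neq; discriminate.
Qed.

Lemma Gfn_upd G l n w t : Gfn G l n (upd w (VD l 0) t) =
  G l (w VX) n t (fun l' => w (VU l' 0)) (fun l' => w (VU l' (-1))).
Proof.
  unfold Gfn; rewrite upd_eq, upd_neq by discriminate.
  f_equal; apply functional_extensionality; intro; apply upd_neq; discriminate.
Qed.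

Section ShiftSurjective.

Variables (N : nat) (F G : Ftype).
Hypothesis HF : forall j, (j < N)%nat -> forall n, analytic_on (dynx_var N) (Ffn F j n).
Hypothesis HG : forall j, (j < N)%nat -> forall n, analytic_on (dynx_var N) (Gfn G j n).
Hypothesis Hrew : forall j, (j < N)%nat -> forall (x : R) (n : Z) (a b : R) (u v : nat -> R),
  a = F j x (n - 1)%Z b v u <-> b = G j x n a u v.

(* By [Hrew], [a |-> F^l(.., a, ..)] has the inverse [b |-> G^l(.., b, ..)]; both are
   differentiable, so the chain rule rules out a vanishing derivative. *)
Lemma Fprime_neq_0 l n w : (l < N)%nat -> Fprime F l n w <> 0.
Proof.
  intros Hl.
  set (phi := fun t => Ffn F l n (upd w (VD l 0) t)).
  set (w1 := fun v => match v with VU l' m => w (VU l' (m + 1)%Z) | _ => w v end).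
  set (psi := fun b => Gfn G l (n + 1)%Z (upd w1 (VD l 0) b)).
  assert (Hinv : forall t, psi (phi t) = t).
  { intro t; unfold psi, phi; rewrite Gfn_upd, Ffn_upd; symmetry.
    apply (Hrew l Hl (w VX) (n + 1)%Z _ t (fun l' => w (VU l' 1)) (fun l' => w (VU l' 0))).
    rewrite Z.add_simpl_r; reflexivity. }
  set (t1 := w (VD l 0)).
  assert (D1 : ex_derive phi t1)
    by apply has_pseries_at_ex_derive, (analytic_on_line_analytic _ _ (HF l Hl n)).
  assert (D2 : ex_derive psi (phi t1))
    by apply has_pseries_at_ex_derive, (analytic_on_line_analytic _ _ (HG l Hl (n + 1)%Z)).
  pose proof (is_derive_comp psi phi t1 _ _ (Derive_correct _ _ D2) (Derive_correct _ _ D1)) as Hc.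
  apply is_derive_unique in Hc.
  rewrite (Derive_ext _ id _ Hinv), Derive_id in Hc.
  change (Fprime F l n w) with (Derive phi t1); intro H0; rewrite H0 in Hc.
  unfold scal in Hc; simpl in Hc; unfold mult in Hc; simpl in Hc; lra.
Qed.

Lemma Dxn_Ffn_solve l n M w y : (l < N)%nat ->
  exists t, Dxn N F G M (Ffn F l) n (upd w (VD l M) t) = y.
Proof.
  intros Hl; destruct M as [|M].
  - exists (G l (w VX) (n + 1)%Z y (fun l' => w (VU l' 1)) (fun l' => w (VU l' 0))).
    simpl; rewrite Ffn_upd; symmetry.
    pose proof (proj2 (Hrew l Hl (w VX) (n + 1)%Z y _ (fun l' => w (VU l' 1))
      (fun l' => w (VU l' 0))) eq_refl) as E.
    rewrite Z.add_simpl_r in E; exact E.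
  - destruct (Dxn_Ffn_affine N F G l n M Hl) as (A & HA & EA).
    exists ((y - A w) / Fprime F l n w); rewrite EA, upd_eq.
    rewrite (HA _ w), (Fprime_depends_on F l n M _ w); [field; apply Fprime_neq_0, Hl| |];
      intros v Hv; rewrite upd_neq; auto; intros <-; simpl in Hv; lia.
Qed.

(* The orders [M] of the [N] components are adjusted one component at a time;
   [Dxn_Ffn_depends_on] shows that later adjustments do not spoil earlier ones. *)
Lemma Dxn_Ffn_solve_row n M (p : pt) w : forall K, (K <= N)%nat -> exists w',
  (forall v, (forall l, (l < K)%nat -> v <> VD l M) -> w' v = w v) /\
  forall l, (l < K)%nat -> Dxn N F G M (Ffn F l) n w' = p (VD l M).
Proof.
  induction K as [|K IH]; intros HK; [exists w; split; [reflexivity|intros; lia]|].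
  destruct (IH ltac:(lia)) as (w' & Ew & Hw).
  destruct (Dxn_Ffn_solve K n M w' (p (VD K M)) ltac:(lia)) as [t Ht].
  exists (upd w' (VD K M) t); split.
  - intros v Hv; rewrite upd_neq; [apply Ew; intros l Hl; apply Hv; lia|].
    intros E; apply (Hv K); auto.
  - intros l Hl; destruct (Nat.eq_dec l K) as [->|ne]; [exact Ht|].
    rewrite <- (Hw l) by lia; apply (Dxn_Ffn_depends_on N F G l n M ltac:(lia)).
    intros v [Hv| ->]; rewrite upd_neq; auto.
    + intros <-; simpl in Hv; lia.
    + intro E; injection E; lia.
Qed.

Lemma Sh_agrees n (p : pt) M :
  exists w, forall v, dyn_var N v -> order_lt M v -> Sh N F G n w v = p v.
Proof.
  induction M as [|M [w Hw]].
  - exists (fun v => match v with VU j m => p (VU j (m - 1)%Z) | _ => 0 end).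
    intros [|j m|j i] Hv Ho; simpl in *; [contradiction| |lia].
    rewrite Z.add_simpl_r; reflexivity.
  - destruct (Dxn_Ffn_solve_row n M p w N (le_n N)) as (w' & Ew & Hw').
    exists w'; intros [|j m|j i] Hv Ho; simpl in Hv, Ho; [contradiction| |].
    + rewrite <- (Hw (VU j m)) by (simpl; auto); simpl; rewrite Ew; [reflexivity|discriminate].
    + simpl; destruct (Nat.eq_dec i M) as [->|ne]; [apply Hw', Hv|].
      rewrite <- (Hw (VD j i)) by (simpl; auto; lia); simpl.
      apply (Dxn_Ffn_order_lt N F G j n i Hv).
      intros v Hov; apply Ew; intros l _ ->; simpl in Hov; lia.
Qed.

Lemma dyn_fun_Sh_zero n g : dyn_fun N g -> (forall w, g (Sh N F G n w) = 0) -> forall p, g p = 0.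
Proof.
  intros Hg H0 p.
  destruct (analytic_on_depends_on _ _ Hg) as (L & HL & Hdep).
  destruct (exists_order_bound L) as [M HM].
  destruct (Sh_agrees n p M) as [w Hw].
  rewrite <- (H0 w); apply Hdep; intros v Hv; symmetry; apply Hw; auto.
Qed.

End ShiftSurjective.

(** * The conjugation identity on coordinates *)

Lemma dpart_coord_VU j m j' k w : dpart (fun w => w (VU j m)) (VU j' k) w =
  if Nat.eq_dec j' j then (if Z.eq_dec k m then 1 else 0) else 0.
Proof.
  rewrite dpart_coord; destruct (var_eq_dec (VU j' k) (VU j m)) as [E|E].
  - injection E as -> ->; destruct (Nat.eq_dec j j), (Z.eq_dec m m); congruence.
  - destruct (Nat.eq_dec j' j), (Z.eq_dec k m); subst; congruence.
Qed.

(* [alpha^j(m)] extended by [alpha^j(0) = 0]: [K] has no [d/du_n] component. *)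
Definition alpha_ext (alpha : nat -> Z -> pt -> R) (j : nat) (m : Z) (w : pt) : R :=
  if Z.eq_dec m 0 then 0 else alpha j m w.

Lemma Kop_coord N alpha j m n w : (j < N)%nat ->
  Kop N alpha (lift (fun w => w (VU j m))) n w = alpha_ext alpha j m w.
Proof.
  intros Hj; unfold Kop, lift, alpha_ext; rewrite (fsum_single N _ j Hj).
  2:{ intros j' ne; apply Series_zero; intro k; rewrite !dpart_coord_VU.
      destruct (Nat.eq_dec j' j); [congruence|ring]. }
  rewrite (Series_ext _ (fun k =>
      alpha j (Z.of_nat (S k)) w * (if Z.eq_dec (Z.of_nat (S k)) m then 1 else 0) +
      alpha j (- Z.of_nat (S k))%Z w * (if Z.eq_dec (- Z.of_nat (S k)) m then 1 else 0)))
    by (intro k; rewrite !dpart_coord_VU; destruct (Nat.eq_dec j j); [reflexivity|congruence]).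
  destruct (Z.eq_dec m 0) as [->|nz].
  - apply Series_zero; intro k.
    destruct (Z.eq_dec (Z.of_nat (S k)) 0), (Z.eq_dec (- Z.of_nat (S k)) 0); [lia..|ring].
  - set (k0 := (Z.to_nat (Z.abs m) - 1)%nat).
    rewrite (Series_single _ k0); [|intros k Hk;
      destruct (Z.eq_dec (Z.of_nat (S k)) m), (Z.eq_dec (- Z.of_nat (S k)) m); [lia..|ring]].
    destruct (Z.eq_dec (Z.of_nat (S k0)) m) as [e1|ne1],
      (Z.eq_dec (- Z.of_nat (S k0)) m) as [e2|ne2]; unfold k0 in *;
      [lia|rewrite e1; ring|rewrite e2; ring|lia].
Qed.

Lemma sum_f_R0_affine y (c : nat -> R) K : (forall e, (2 <= e)%nat -> c e = 0) ->
  sum_f_R0 (fun e => y ^ e * c e) (S K) = c 0%nat + y * c 1%nat.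
Proof.
  intros Hc; induction K as [|K IH]; [simpl; ring|].
  change (sum_f_R0 (fun e => y ^ e * c e) (S K) + y ^ S (S K) * c (S (S K)) =
          c 0%nat + y * c 1%nat).
  rewrite IH, (Hc (S (S K))) by lia; ring.
Qed.

Lemma dyn_fun_coord N v : dyn_var N v -> dyn_fun N (fun w => w v).
Proof.
  intros Hv; exists (v :: nil); split; [repeat constructor; intros []|].
  split; [intros u [<-|[]]; exact Hv|].
  split; [intros w w' E; apply E; left; reflexivity|].
  intro w; exists 1; split; [lra|].
  set (c0 := fun e => match e with 0%nat => w v | 1%nat => 1 | _ => 0 end).
  exists (fun a => c0 (a v)); intros w' Hw'.
  assert (Hbox : forall (c : nat -> R) K y, (forall e, (2 <= e)%nat -> c e = 0) ->
    box_sum (v :: nil) (S K) (fun a => c (a v)) y = c 0%nat + y v * c 1%nat).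
  { intros c K y Hc; transitivity (sum_f_R0 (fun e => y v ^ e * c e) (S K));
      [|apply sum_f_R0_affine, Hc].
    cbn [box_sum].
    apply sum_eq; intros e _; unfold mset; destruct (var_eq_dec v v); [|congruence]; simpl; ring. }
  assert (Hc0 : forall e, (2 <= e)%nat -> c0 e = 0) by (intros [|[|e]] He; [lia|lia|reflexivity]).
  split.
  - apply is_lim_seq_ext_loc with (fun _ => w' v); [|apply is_lim_seq_const].
    exists 1%nat; intros [|K] HK; [lia|]; rewrite Hbox by exact Hc0; simpl; ring.
  - exists (Rabs (w v) + 1); intros [|K].
    + simpl; unfold mset; destruct (var_eq_dec v v); [|congruence]; simpl; lra.
    + rewrite (Hbox (fun e => Rabs (c0 e)))
        by (intros e He; rewrite Hc0, Rabs_R0 by exact He; reflexivity).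
      specialize (Hw' v (or_introl eq_refl)); simpl; rewrite Rabs_R1; lra.
Qed.

Section Conjugation.

Variables (N : nat) (F G : Ftype) (alpha : nat -> Z -> pt -> R) (h : pt -> R) (j : nat).
Hypothesis HF : forall j, (j < N)%nat -> forall n, analytic_on (dynx_var N) (Ffn F j n).
Hypothesis HG : forall j, (j < N)%nat -> forall n, analytic_on (dynx_var N) (Gfn G j n).
Hypothesis Hrew : forall j, (j < N)%nat -> forall (x : R) (n : Z) (a b : R) (u v : nat -> R),
  a = F j x (n - 1)%Z b v u <-> b = G j x n a u v.
Hypothesis Halpha : forall j m, (j < N)%nat -> m <> 0%Z -> dyn_fun N (alpha j m).
Hypothesis Hh : dyn_fun N h.
Hypothesis Hconj : forall f, dyn_fun N f -> forall (n : Z) (w : pt),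
  Dn N F G (Kop N alpha (Dninv N F G (lift f))) n w = h w * Kop N alpha (lift f) n w.
Hypothesis Hj : (j < N)%nat.

(* [Hconj] applied to the coordinate function [u^j_{n+m}]. *)
Lemma alpha_ext_conj m w :
  alpha_ext alpha j (m - 1) (Sh N F G 0 w) = h w * alpha_ext alpha j m w.
Proof.
  pose proof (Hconj _ (dyn_fun_coord N (VU j m) Hj) 0%Z w) as H; unfold Dn in H.
  change (Dninv N F G (lift (fun w => w (VU j m)))) with (lift (fun w => w (VU j (m - 1)%Z))) in H.
  rewrite !Kop_coord in H by exact Hj; exact H.
Qed.

Lemma alpha_ext_Sh_zero m :
  (forall w, alpha_ext alpha j m (Sh N F G 0 w) = 0) -> forall w, alpha_ext alpha j m w = 0.
Proof.
  intros H w; unfold alpha_ext in *; destruct (Z.eq_dec m 0) as [|nz]; [reflexivity|].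
  apply (dyn_fun_Sh_zero N F G HF HG Hrew 0); [exact (Halpha j m Hj nz)|].
  intro w'; specialize (H w'); destruct (Z.eq_dec m 0); [contradiction|exact H].
Qed.

Lemma alpha_ext_0 w : alpha_ext alpha j 0 w = 0.
Proof. reflexivity. Qed.

Lemma alpha_ext_neg k w : alpha_ext alpha j (- Z.of_nat k) w = 0.
Proof.
  revert w; induction k as [|k IH]; [exact alpha_ext_0|].
  apply alpha_ext_Sh_zero; intro w.
  replace (- Z.of_nat (S k))%Z with (- Z.of_nat k - 1)%Z by lia.
  rewrite alpha_ext_conj, IH; ring.
Qed.

(* Here the recursion runs the other way: [alpha^j(k) = 0] only gives [h alpha^j(k+1) = 0],
   and the identity theorem is needed to cancel [h]. *)
Lemma alpha_ext_pos k w : alpha_ext alpha j (Z.of_nat k) w = 0.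
Proof.
  revert w; induction k as [|k IH]; [exact alpha_ext_0|].
  assert (Hk : Z.of_nat (S k) <> 0%Z) by lia.
  assert (Hprod : forall w, h w * alpha j (Z.of_nat (S k)) w = 0).
  { intro w; transitivity (alpha_ext alpha j (Z.of_nat k) (Sh N F G 0 w)); [|apply IH].
    replace (Z.of_nat k) with (Z.of_nat (S k) - 1)%Z by lia.
    rewrite alpha_ext_conj; unfold alpha_ext.
    destruct (Z.eq_dec _ 0); [contradiction|reflexivity]. }
  destruct (dyn_fun_mult_zero N h _ Hh (Halpha j _ Hj Hk) Hprod) as [H0|Ha].
  - apply alpha_ext_Sh_zero; intro w.
    replace (Z.of_nat (S k)) with (Z.of_nat (S (S k)) - 1)%Z by lia.
    rewrite alpha_ext_conj, H0; ring.
  - intro w; unfold alpha_ext; destruct (Z.eq_dec _ 0); [reflexivity|apply Ha].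
Qed.

End Conjugation.

Theorem lemma2 (N : nat) (F G : Ftype)
  (HF : forall j, (j < N)%nat -> forall n, analytic_on (dynx_var N) (Ffn F j n))
  (HG : forall j, (j < N)%nat -> forall n, analytic_on (dynx_var N) (Gfn G j n))
  (Hrew : forall j, (j < N)%nat -> forall (x : R) (n : Z) (a b : R) (u v : nat -> R),
      a = F j x (n - 1)%Z b v u <-> b = G j x n a u v)
  (alpha : nat -> Z -> pt -> R)
  (Halpha : forall j m, (j < N)%nat -> m <> 0%Z -> dyn_fun N (alpha j m))
  (h : pt -> R) (Hh : dyn_fun N h)
  (Hconj : forall f, dyn_fun N f -> forall (n : Z) (w : pt),
      Dn N F G (Kop N alpha (Dninv N F G (lift f))) n w = h w * Kop N alpha (lift f) n w) :
  forall j m, (j < N)%nat -> m <> 0%Z -> forall w, alpha j m w = 0.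
Proof.
  intros j m Hj Hm w.
  replace (alpha j m w) with (alpha_ext alpha j m w)
    by (unfold alpha_ext; destruct (Z.eq_dec m 0); [contradiction|reflexivity]).
  destruct (Z_le_gt_dec 0 m) as [Hpos|Hneg].
  - rewrite <- (Z2Nat.id m Hpos); eapply alpha_ext_pos; eassumption.
  - replace m with (- Z.of_nat (Z.to_nat (- m)))%Z by lia; eapply alpha_ext_neg; eassumption.
Qed.
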